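(* Let $\mathbb{K}$ be a field of characteristic $p>0$, let $a_1,\dots,a_k\in\mathbb{K}$, and let $\alpha_1\le\dots\le\alpha_k$ and $\beta_1,\dots,\beta_k$ be nonnegative integers with $p>\max_j(\alpha_j+\beta_j)$. Let $P=\sum_{j=1}^k a_jX^{\alpha_j}(1+X)^{\beta_j}\in\mathbb{K}[X]$. If $P\neq0$, then \[\operatorname{val}(P)\le\max_{1\le j\le k}\left(\alpha_j+\binom{k+1-j}{2}\right).\]
   Context: For a nonzero polynomial $P$, $\operatorname{val}(P)$ is the largest integer $v$ such that $X^v$ divides $P$. *)

From HB Require Import structures.
From mathcomp Require Import all_boot all_order all_algebra.
Set Implicit Arguments. Unset Strict Implicit. Unset Printing Implicit Defensive.
Import GRing.Theory.
Local Open Scope ring_scope.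

(* val P = largest v such that 'X^v divides P (for P != 0).
   Since 'X^v %| P with P != 0 forces v < size P, the maximum over
   v < size P is the maximum over all v.  (val 0 = 0 is a junk value.) *)
Definition pval (K : fieldType) (P : {poly K}) : nat :=
  \max_(v < size P | ('X^v %| P)) (v : nat).

From HB Require Import structures.
From mathcomp Require Import all_boot all_order all_algebra.
From mathcomp Require Import ring zify.
From mathcomp Require perm.
From Stdlib Require Import Classical ClassicalEpsilon.
Set Implicit Arguments. Unset Strict Implicit. Unset Printing Implicit Defensive.
Import GRing.Theory.
Local Open Scope ring_scope.

(* Call a combination f_j + sum_(l > j) c_l f_l a tail at j.  If some tail vanishes, f_j is a
   combination of later blocks and the index j can be eliminated.  Otherwise,
   for each j pick a tail of maximal valuation v_j: then alpha_j <= v_j < p,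
   and the v_j are pairwise distinct (two tails of equal valuation could be
   combined to cancel their lowest terms).  P is a nonzero multiple of a tail
   at its first index j0, so val P <= v_j0.  Finally a Wronskian argument on
   these maximal tails g_j at the m indices j >= j0 gives
   sum v_j <= sum alpha_j + C(m,2), hence v_j0 <= alpha_j0 + C(m,2):
   with Y = X(1+X), the determinant of (Y^i g_j^(i)) factors both as
   X^(sum v_j) times a polynomial not vanishing at 0 (a falling-factorial
   determinant at the distinct v_j < p) and as X^(sum alpha_j) (1+X)^(sum
   beta_j) times a polynomial of size <= C(m,2)+1. *)

Section Valuation.
Variable K : fieldType.
Implicit Types (h q : {poly K}) (n : nat).

Lemma XsubC0 : ('X - 0%:P : {poly K}) = 'X.
Proof. by rewrite subr0. Qed.

Lemma pval_mup h : h != 0 -> pval h = mup 0 h.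
Proof.
move=> h0; apply/eqP; rewrite eqn_leq; apply/andP; split.
  by apply/bigmax_leqP => v dv; rewrite mup_geq // XsubC0.
have dv : 'X^(mup 0 h) %| h by rewrite -XsubC0 -mup_geq.
have lt : (mup 0 h < size h)%N by rewrite -(size_polyXn K) dvdp_leq.
exact: (leq_bigmax_cond (Ordinal lt)).
Qed.

Lemma pval_geq h n : h != 0 -> (n <= pval h)%N = ('X^n %| h).
Proof. by move=> h0; rewrite pval_mup // mup_geq // XsubC0. Qed.

Lemma dvdp_Xpval h : 'X^(pval h) %| h.
Proof.
have [->|h0] := eqVneq h 0; first exact: dvdp0.
by rewrite -pval_geq.
Qed.

Lemma pval_lt_size h : h != 0 -> (pval h < size h)%N.
Proof. by move=> h0; rewrite -(size_polyXn K) dvdp_leq // -pval_geq. Qed.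

Lemma pvalM h q : h != 0 -> q != 0 -> pval (h * q) = (pval h + pval q)%N.
Proof. by move=> h0 q0; rewrite !pval_mup ?mulf_neq0 // mupM. Qed.

Lemma neq0_at0 h : h.[0] != 0 -> h != 0.
Proof. by apply: contraNneq => ->; rewrite horner0. Qed.

Lemma pval_eq0 h : h.[0] != 0 -> pval h = 0%N.
Proof. by move=> h00; rewrite pval_mup ?neq0_at0 // mupNroot. Qed.

Lemma pvalXn n : pval ('X^n : {poly K}) = n.
Proof. by rewrite pval_mup ?monic_neq0 ?monicXn // -XsubC0 mup_XsubCX eqxx. Qed.

Lemma pvalZ (c : K) h : c != 0 -> pval (c *: h) = pval h.
Proof.
move=> c0; have [->|h0] := eqVneq h 0; first by rewrite scaler0.
by rewrite -mul_polyC pval_mup ?mulf_neq0 ?polyC_eq0 // mupMr ?rootC // pval_mup.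
Qed.

Lemma pvalM_unit h q : h != 0 -> q.[0] != 0 -> pval (h * q) = pval h.
Proof. by move=> h0 q0; rewrite !pval_mup ?mulf_neq0 ?(neq0_at0 q0) // mupMl. Qed.

Lemma pvalMXn h n : h != 0 -> pval (h * 'X^n) = (pval h + n)%N.
Proof. by move=> h0; rewrite pvalM ?pvalXn // monic_neq0 // monicXn. Qed.

Definition punit h : {poly K} := h %/ 'X^(pval h).

Lemma punitK h : 'X^(pval h) * punit h = h.
Proof. by rewrite mulrC divpK // dvdp_Xpval. Qed.

Lemma punit0 h : h != 0 -> (punit h).[0] != 0.
Proof.
move=> h0; apply/negP => /factor_theorem[q eq_u].
have : 'X^((pval h).+1) %| h.
  by rewrite -{2}(punitK h) eq_u XsubC0 mulrCA -exprSr dvdp_mulIr.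
by rewrite -pval_geq // ltnn.
Qed.

Lemma dvdp_cancel_lowest h q : q != 0 -> pval h = pval q ->
  'X^((pval h).+1) %| h - ((punit h).[0] / (punit q).[0]) *: q.
Proof.
move=> q0 hq; set lam := _ / _.
have -> : h - lam *: q = 'X^(pval h) * (punit h - lam *: punit q).
  by rewrite mulrBr -scalerAr punitK hq punitK.
have : root (punit h - lam *: punit q) 0.
  by rewrite /root hornerD hornerN hornerZ /lam divfK ?subrr // punit0.
by case/factor_theorem => r ->; rewrite XsubC0 mulrCA -exprSr dvdp_mulIr.
Qed.

End Valuation.

Section WronskianRows.
Variable K : fieldType.
Implicit Types (w b i : nat) (r : {poly K}).

(* The weight Y = X(1+X): Y^i f^(i) keeps the factor X^w (1+X)^b of
   f = X^w (1+X)^b r, up to polynomials of degree <= 1 recorded by lin. *)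
Definition Y : {poly K} := 'X * (1 + 'X).

Definition lin (c d : K) : {poly K} := c *: (1 + 'X) + d *: 'X.

Lemma linE (c d : K) : lin c d = c%:P * (1 + 'X) + d%:P * 'X.
Proof. by rewrite /lin !mul_polyC. Qed.

Lemma derivY : Y^`() = lin 1 1.
Proof. by rewrite /Y linE derivM derivD derivC derivX add0r; ring. Qed.

Lemma mul_deriv_exp (q : {poly K}) n : q * (q ^+ n)^`() = n%:R *: (q ^+ n * q^`()).
Proof.
case: n => [|n]; first by rewrite expr0 -polyC1 derivC mulr0 scale0r.
by rewrite deriv_exp /= -scaler_nat -scalerAr exprS; congr (_ *: _); ring.
Qed.

Lemma linZ (c d e : K) : e *: lin c d = lin (e * c) (e * d).
Proof. by rewrite /lin scalerDr !scalerA. Qed.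

Lemma Y_deriv_exp i : Y * (Y ^+ i)^`() = Y ^+ i * lin i%:R i%:R.
Proof. by rewrite mul_deriv_exp derivY scalerAr linZ !mulr1. Qed.

Lemma Y_deriv_monomial w b :
  Y * ('X^w * (1 + 'X) ^+ b)^`() = 'X^w * (1 + 'X) ^+ b * lin w%:R b%:R.
Proof.
have dX := mul_deriv_exp 'X w; have d1X := mul_deriv_exp (1 + 'X) b.
rewrite derivX in dX; rewrite derivD derivC derivX add0r in d1X.
rewrite derivM /Y.
transitivity ((1 + 'X) ^+ b * ('X * ('X^w)^`()) * (1 + 'X) +
              'X^w * ((1 + 'X) * ((1 + 'X) ^+ b)^`()) * 'X : {poly K}); first by ring.
by rewrite dX d1X !mulr1 linE -!mul_polyC !polyC_natr; ring.
Qed.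

(* The remainder in Y^i (X^w (1+X)^b r)^(i) = X^w (1+X)^b wrem w b r i;
   it has size <= size r + i and value r(0) w (w-1) ... (w-i+1) at 0. *)
Fixpoint wrem w b r i : {poly K} :=
  if i is i'.+1 then
    lin (w%:R - i'%:R) (b%:R - i'%:R) * wrem w b r i' + Y * (wrem w b r i')^`()
  else r.

(* Differentiating the identity for i and multiplying by Y gives it for i+1,
   using Y (X^w (1+X)^b)' = X^w (1+X)^b lin w b and Y (Y^i)' = Y^i lin i i. *)
Lemma wremP w b r i :
  Y ^+ i * ('X^w * (1 + 'X) ^+ b * r)^`(i) = 'X^w * (1 + 'X) ^+ b * wrem w b r i.
Proof.
have := Y_deriv_monomial w b; set E := 'X^w * _; clearbody E => YE.
elim: i => [|i IH]; first by rewrite expr0 derivn0 mul1r.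
move: IH; set R := wrem w b r i; set D := (E * r)^`(i) => IH.
have := congr1 (fun q => Y * q^`()) IH; rewrite /= !derivM => dIH.
transitivity (Y * ((Y ^+ i)^`() * D + Y ^+ i * D^`()) - Y * (Y ^+ i)^`() * D : {poly K}).
  by rewrite exprSr; ring.
rewrite dIH Y_deriv_exp.
transitivity ((Y * E^`()) * R + E * (Y * R^`()) - lin i%:R i%:R * (Y ^+ i * D) : {poly K}).
  by ring.
by rewrite YE IH !linE !polyCB -/R; ring.
Qed.

Lemma size_lin (c d : K) : (size (lin c d) <= 2)%N.
Proof.
have s1X : size (1 + 'X : {poly K}) = 2 by rewrite addrC -polyC1 size_XaddC.
rewrite /lin (leq_trans (size_polyD _ _)) // geq_max.
by rewrite !(leq_trans (size_scale_leq _ _)) ?s1X ?size_polyX.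
Qed.

Lemma size_Y_deriv (R : {poly K}) : (size (Y * R^`())%R <= (size R).+1)%N.
Proof.
have [->|R0] := eqVneq R 0; first by rewrite derivC mulr0 size_poly0.
have sY : size Y = 3 by rewrite /Y mulrDr mulr1 -expr2 addrC size_polyDl ?size_polyXn ?size_polyX.
have := lt_size_deriv R0; have := size_polyMleq Y R^`(); rewrite sY; lia.
Qed.

Lemma size_wrem w b r i : (size (wrem w b r i) <= size r + i)%N.
Proof.
elim: i => [|i IH] /=; first by rewrite addn0.
set R := wrem w b r i in IH *; set L := lin _ _.
apply: leq_trans (size_polyD _ _) _; rewrite geq_max; apply/andP; split.
  move: (size_polyMleq L R) (size_lin (w%:R - i%:R) (b%:R - i%:R)) IH; rewrite -/L.
  by move: (size (L * R)) (size L) (size R) (size r) => sLR sL sR sr; lia.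
by apply: leq_trans (size_Y_deriv R) _; rewrite addnS ltnS.
Qed.

Lemma wrem_at0 w b r i : (wrem w b r i).[0] = r.[0] * \prod_(l < i) (w%:R - l%:R).
Proof.
elim: i => [|i IH] /=; first by rewrite big_ord0 mulr1.
have lin0 (c d : K) : (lin c d).[0] = c by rewrite /lin !hornerE.
rewrite hornerD !hornerM lin0 hornerX !mul0r addr0 IH big_ord_recr /=; ring.
Qed.

End WronskianRows.
Arguments Y {K}.

Section RowBoundedDeterminant.
Import perm.

(* If the entries of row i have size at most i+1, the determinant has size at
   most C(m,2)+1: every term of the Leibniz expansion is such a product. *)
Lemma size_det_rowbounded (R : comNzRingType) m (Q : 'M[{poly R}]_m) :
  (forall i j, size (Q i j) <= i.+1)%N -> (size (\det Q) <= 'C(m, 2).+1)%N.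
Proof.
move=> hQ; apply: leq_trans (size_sum _ _ _) _; apply/bigmax_leqP_seq => s _ _.
apply: leq_trans (size_polyMleq _ _) _.
have sgn : (size ((-1) ^+ (odd_perm s) : {poly R}) <= 1)%N.
  by have := size_poly_exp_leq (-1 : {poly R}) (odd_perm s); rewrite size_polyN size_poly1.
have := size_poly_prod_leq xpredT (fun i => Q i (s i)).
have rows : (\sum_(i < m) size (Q i (s i)) <= 'C(m, 2) + m)%N.
  apply: (@leq_trans (\sum_(i < m) ((i : nat) + 1))%N).
    by apply: leq_sum => i _; rewrite addn1.
  by rewrite big_split /= sum1_card card_ord -bin2_sum big_mkord.
rewrite cardT size_enum_ord; move: rows sgn; rewrite -/(\prod_i Q i (s i)).
by move: (size _) (size _) (\sum_i _)%N => a b c; lia.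
Qed.

End RowBoundedDeterminant.

Section FallingFactorial.
Variable K : fieldType.

Definition falling (i : nat) : {poly K} :=
  \prod_(c <- [seq (l%:R : K) | l <- iota 0 i]) ('X - c%:P).

Lemma size_falling i : size (falling i) = i.+1.
Proof. by rewrite /falling size_prod_XsubC size_map size_iota. Qed.

Lemma lead_coef_falling i : lead_coef (falling i) = 1.
Proof. by rewrite /falling lead_coef_prod_XsubC. Qed.

Lemma horner_falling i y : (falling i).[y] = \prod_(l < i) (y - l%:R).
Proof.
rewrite /falling horner_prod big_map -(subn0 i) -/(index_iota 0 i) big_mkord subn0.
by apply: eq_bigr => l _; rewrite hornerXsubC.
Qed.

(* The matrix of falling factorials (x_j)_i at distinct points is invertible:
   it is a unitriangular change of basis of the Vandermonde matrix. *)
Lemma det_falling_neq0 m (x : 'I_m -> K) : injective x ->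
  \det (\matrix_(i < m, j < m) \prod_(l < i) (x j - l%:R)) != 0.
Proof.
move=> xinj.
pose C : 'M[K]_m := \matrix_(i, l) (falling i)`_l.
have -> : \matrix_(i < m, j < m) \prod_(l < i) (x j - l%:R) =
          C *m Vandermonde m (\row_j x j).
  apply/matrixP => i j; rewrite !mxE -horner_falling.
  rewrite (@horner_coef_wide _ m) ?size_falling //.
  by apply: eq_bigr => l _; rewrite !mxE.
have C_trig : is_trig_mx C.
  by apply/is_trig_mxP => i j ij; rewrite mxE nth_default // size_falling.
rewrite det_mulmx det_trig // det_Vandermonde mulf_neq0 //.
  apply/prodf_neq0 => i _; rewrite mxE.
  by have := lead_coef_falling i; rewrite /lead_coef size_falling => ->; exact: oner_neq0.
apply/prodf_neq0 => i _; apply/prodf_neq0 => j ij; rewrite !mxE subr_eq0.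
by apply: contraTneq ij => /xinj ->; rewrite ltnn.
Qed.

End FallingFactorial.

Lemma natr_inj_lt (K : fieldType) p (hp : p \in [pchar K]) a b :
  (a < p)%N -> (b < p)%N -> (a%:R : K) = b%:R -> a = b.
Proof.
wlog ab : a b / (a <= b)%N.
  by move=> H ap bp e; case: (leqP a b) => h; [exact: H | apply/esym/H => //; exact: ltnW].
move=> ap bp e; apply/eqP; rewrite eqn_leq ab /=.
have dv : (p %| b - a)%N by rewrite (dvdn_pcharf hp) natrB // e subrr.
rewrite -subn_eq0; apply/eqP; apply: contraTeq dv => ba0.
by rewrite gtnNdvd // ?lt0n // (leq_ltn_trans (leq_subr _ _) bp).
Qed.

Section WronskianBound.
Variable K : fieldType.

Definition wronskian m (h : 'I_m -> {poly K}) : 'M[{poly K}]_m :=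
  \matrix_(i, j) (Y ^+ i * (h j)^`(i)).

Lemma wronskian_comb m (f : 'I_m -> {poly K}) (M : 'M[K]_m) :
  wronskian (fun j => \sum_i M i j *: f i) = wronskian f *m map_mx polyC M.
Proof.
apply/matrixP => i j; rewrite !mxE raddf_sum mulr_sumr; apply: eq_bigr => l _.
by rewrite !mxE /= derivnZ -mul_polyC mulrCA mulrC.
Qed.

Lemma wronskian_monomials m (w b : 'I_m -> nat) (r : 'I_m -> {poly K}) :
  wronskian (fun j => 'X^(w j) * (1 + 'X) ^+ (b j) * r j) =
  (\matrix_(i < m, j < m) wrem (w j) (b j) (r j) i) *m
    diag_mx (\row_j ('X^(w j) * (1 + 'X) ^+ (b j) : {poly K})).
Proof. by apply/matrixP => i j; rewrite mul_mx_diag !mxE wremP mulrC. Qed.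

Lemma size_det_wrem1 m (w b : 'I_m -> nat) :
  (size (\det (\matrix_(i < m, j < m) wrem (w j) (b j) (1 : {poly K}) i)) <= 'C(m, 2).+1)%N.
Proof.
apply: size_det_rowbounded => i j; rewrite mxE.
by apply: leq_trans (size_wrem _ _ _ _) _; rewrite size_poly1.
Qed.

(* At 0 the remainder matrix is a falling-factorial matrix times a diagonal
   matrix; it is invertible when the exponents w_j are distinct below p. *)
Lemma det_wrem_at0 p (hp : p \in [pchar K]) m (w b : 'I_m -> nat)
    (u : 'I_m -> {poly K}) :
  injective w -> (forall j, w j < p)%N -> (forall j, (u j).[0] != 0) ->
  (\det (\matrix_(i < m, j < m) wrem (w j) (b j) (u j) i)).[0] != 0.
Proof.
move=> w_inj w_p u0; rewrite -horner_evalE -det_map_mx.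
have -> : map_mx (horner_eval 0) (\matrix_(i < m, j < m) wrem (w j) (b j) (u j) i) =
    (\matrix_(i < m, j < m) \prod_(l < i) ((w j)%:R - l%:R)) *m diag_mx (\row_j (u j).[0]).
  by apply/matrixP => i j; rewrite mul_mx_diag !mxE horner_evalE wrem_at0 mulrC.
rewrite det_mulmx det_diag mulf_neq0 //; last by apply/prodf_neq0 => j _; rewrite mxE.
by apply: det_falling_neq0 => i j /(natr_inj_lt hp (w_p i) (w_p j)) /w_inj.
Qed.

(* Computing the Wronskian of g_j = X^(pval g_j) punit(g_j) in two ways: from
   this factorization, and from the expression of the g_j as combinations. *)
Lemma wronskian_det_identity m (al be : 'I_m -> nat) (M : 'M[K]_m)
    (g : 'I_m -> {poly K}) :
  (forall j, g j = \sum_i M i j *: ('X^(al i) * (1 + 'X) ^+ (be i))) ->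
  \det (\matrix_(i < m, j < m) wrem (pval (g j)) 0 (punit (g j)) i) *
    'X^(\sum_j pval (g j)) =
  \det M *: \det (\matrix_(i < m, j < m) wrem (al j) (be j) (1 : {poly K}) i) *
    (1 + 'X) ^+ (\sum_i be i) * 'X^(\sum_i al i).
Proof.
move=> gE.
have wron_g : wronskian g = (\matrix_(i < m, j < m) wrem (pval (g j)) 0 (punit (g j)) i)
                            *m diag_mx (\row_j ('X^(pval (g j)) * (1 + 'X) ^+ 0)).
  rewrite -wronskian_monomials; apply/matrixP => i j.
  by rewrite !mxE expr0 mulr1 punitK.
have wron_f : wronskian g = (\matrix_(i < m, j < m) wrem (al j) (be j) 1 i)
                            *m diag_mx (\row_j ('X^(al j) * (1 + 'X) ^+ (be j)))
                            *m map_mx polyC M.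
  rewrite -wronskian_monomials -wronskian_comb; apply/matrixP => i j.
  by rewrite !mxE gE; under [in RHS]eq_bigr do rewrite mulr1.
have := congr1 determinant (etrans (esym wron_g) wron_f).
rewrite !det_mulmx !det_diag det_map_mx /=.
under eq_bigr do rewrite mxE expr0 mulr1.
under [X in _ = _ * X * _]eq_bigr do rewrite mxE.
by rewrite big_split /= !prodrXr => ->; rewrite -mul_polyC; ring.
Qed.

(* Indeed, in
   the identity above the left side has valuation sum_j pval g_j, while the
   right side has valuation sum_i al_i + pval T with T of size <= C(m,2)+1. *)
Lemma wronskian_pval_bound p (hp : p \in [pchar K]) m (al be : 'I_m -> nat)
    (M : 'M[K]_m) (g : 'I_m -> {poly K}) :
  (forall j, g j = \sum_i M i j *: ('X^(al i) * (1 + 'X) ^+ (be i))) ->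
  (forall j, g j != 0) -> injective (fun j => pval (g j)) ->
  (forall j, pval (g j) < p)%N ->
  (\sum_j pval (g j) <= \sum_i al i + 'C(m, 2))%N.
Proof.
move=> gE g0 w_inj w_p; have key := wronskian_det_identity gE.
set G := \det _ in key; set T := \det M *: _ in key.
have G0 : G.[0] != 0.
  by apply: (@det_wrem_at0 p hp m _ (fun=> 0%N)) => // j; apply: punit0.
have unit1X : ((1 + 'X) ^+ (\sum_i be i) : {poly K}).[0] != 0.
  by rewrite horner_exp hornerD hornerX hornerC addr0 expr1n oner_neq0.
have T0 : T != 0.
  apply: contraNneq (mulf_neq0 (neq0_at0 G0) (monic_neq0 (monicXn K (\sum_j pval (g j))))).
  by rewrite key => ->; rewrite !mul0r.
have := congr1 (@pval K) key.
rewrite !pvalMXn ?mulf_neq0 ?(neq0_at0 G0) ?(neq0_at0 unit1X) //.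
rewrite pvalM_unit // pval_eq0 // add0n => ->.
have sizeT : (size T <= 'C(m, 2).+1)%N.
  by apply: leq_trans (size_scale_leq _ _) (size_det_wrem1 _ _).
by move: (pval_lt_size T0) sizeT; move: (pval T) (size T) => v s; lia.
Qed.

End WronskianBound.

Lemma exists_argmax (T : Type) (t0 : T) (f : T -> nat) (b : nat) :
  (forall t, f t <= b)%N -> exists t1, forall t, (f t <= f t1)%N.
Proof.
move=> fb; apply: NNPP => nomax.
have above n : exists t, (n <= f t)%N.
  elim: n => [|n [t nt]]; first by exists t0.
  apply: NNPP => none; apply: nomax; exists t => t'; rewrite leqNgt.
  by apply/negP => ftt'; apply: none; exists t'; apply: leq_trans ftt'.
by have [t] := above b.+1; rewrite ltnNge fb.
Qed.

Lemma sum_excess_term (I : finType) (a b : I -> nat) (c : nat) (i0 : I) :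
  (forall i, a i <= b i)%N -> (\sum_i b i <= \sum_i a i + c)%N -> (b i0 <= a i0 + c)%N.
Proof.
move=> ab; rewrite (bigD1 i0) // [in X in (_ <= X + _)%N](bigD1 i0) //=.
have := @leq_sum _ (index_enum I) (fun i => i != i0) a b (fun i _ => ab i).
by move: (\sum_(i | _) a i)%N (\sum_(i | _) b i)%N => sa sb; lia.
Qed.

Section Combinations.
Variables (K : fieldType) (p : nat) (al be : nat -> nat).

Definition block (j : nat) : {poly K} := 'X^(al j) * (1 + 'X) ^+ (be j).

Definition comb (S : seq nat) (c : nat -> K) : {poly K} :=
  \sum_(l <- S) c l *: block l.

Lemma eq_comb S c c' : {in S, c =1 c'} -> comb S c = comb S c'.
Proof. by move=> cc'; rewrite /comb; apply: eq_big_seq => l /cc' ->. Qed.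

Lemma combZ S (x : K) c : comb S (fun l => x * c l) = x *: comb S c.
Proof. by rewrite /comb scaler_sumr; apply: eq_bigr => l _; rewrite scalerA. Qed.

Lemma combB S c c' : comb S (fun l => c l - c' l) = comb S c - comb S c'.
Proof. by rewrite /comb -sumrB; apply: eq_bigr => l _; rewrite scalerBl. Qed.

Lemma comb_filter S (P : pred nat) c :
  {in S, forall l, ~~ P l -> c l = 0} -> comb S c = comb [seq l <- S | P l] c.
Proof.
move=> c0; rewrite /comb big_filter [RHS]big_mkcond; apply: eq_big_seq => l lS.
by case: ifPn => // /(c0 l lS) ->; rewrite scale0r.
Qed.

Lemma comb_nth S c :
  comb S c = \sum_(t < size S) c (nth 0%N S t) *: block (nth 0%N S t).
Proof. by rewrite /comb (big_nth 0%N) big_mkord. Qed.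

Definition admissible (S : seq nat) : Prop :=
  [/\ uniq S, {in S &, forall i j, i <= j -> al i <= al j}%N
    & {in S, forall j, al j + be j < p}%N].

Lemma admissible_filter S (P : pred nat) :
  admissible S -> admissible [seq l <- S | P l].
Proof.
case=> uS mono bnd; split; first exact: filter_uniq.
  by move=> i j; rewrite !mem_filter => /andP[_ iS] /andP[_ jS]; apply: mono.
by move=> j; rewrite mem_filter => /andP[_ jS]; apply: bnd.
Qed.

Lemma size_block j : (size (block j) <= al j + be j + 1)%N.
Proof.
apply: leq_trans (size_polyMleq _ _) _; rewrite size_polyXn.
have := size_poly_exp_leq (1 + 'X : {poly K}) (be j).
rewrite addrC -polyC1 size_XaddC mul1n.
by move: (size _) => s; lia.
Qed.

Lemma pval_comb_lt S c : admissible S -> comb S c != 0 -> (pval (comb S c) < p)%N.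
Proof.
case=> _ _ bnd c0; apply: leq_trans (pval_lt_size c0) _.
rewrite /comb big_seq; apply: (big_ind (fun q : {poly K} => size q <= p)%N).
- by rewrite size_poly0.
- by move=> q r qp rp; apply: leq_trans (size_polyD _ _) _; rewrite geq_max qp rp.
move=> j jS; apply: leq_trans (size_scale_leq _ _) (leq_trans (size_block j) _).
by rewrite addn1 bnd.
Qed.

(* The combination block j + sum_(l > j) c_l block l, which we call the tail
   at j with coefficients c. *)
Definition tailcoef (j : nat) (c : nat -> K) (l : nat) : K :=
  (l == j)%:R + (if (j < l)%N then c l else 0).

Definition tailcomb S j c : {poly K} := comb S (tailcoef j c).

Lemma tailcoef_lt j c l : (l < j)%N -> tailcoef j c l = 0.
Proof. by move=> lj; rewrite /tailcoef ltn_eqF // ltnNge ltnW // addr0. Qed.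

Lemma tailcoef_id j c : tailcoef j c j = 1.
Proof. by rewrite /tailcoef eqxx ltnn addr0. Qed.

Lemma pval_tailcomb_ge S j c : admissible S -> j \in S -> tailcomb S j c != 0 ->
  (al j <= pval (tailcomb S j c))%N.
Proof.
case=> _ mono _ jS t0; rewrite pval_geq // /tailcomb /comb big_seq.
apply: (big_ind (fun q => 'X^(al j) %| q)) => [|q r|l lS]; [exact: dvdp0 | exact: dvdp_add |].
have [lj|jl] := ltnP l j; first by rewrite tailcoef_lt // scale0r dvdp0.
by rewrite -mul_polyC; apply/dvdp_mull/dvdp_mulr/dvdp_exp2l; apply: mono.
Qed.

Lemma tailcoefB j l c d (lam : K) : (j < l)%N ->
  tailcoef j (fun i => c i - lam * tailcoef l d i) =1
  (fun i => tailcoef j c i - lam * tailcoef l d i).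
Proof.
move=> jl i; rewrite /tailcoef; case: (ltngtP j i) => [ji|ij|<-].
- by rewrite addrA.
- by rewrite (ltn_eqF (ltn_trans ij jl)) ltnNge (ltnW (ltn_trans ij jl)) /= addr0 mulr0 subr0.
- by rewrite (ltn_eqF jl) ltnNge (ltnW jl) /= !addr0 mulr0 subr0.
Qed.

Lemma comb_as_tail S a : comb S a != 0 -> exists2 j, j \in S &
  a j != 0 /\ comb S a = a j *: tailcomb S j (fun l => a l / a j).
Proof.
move=> a0; have /hasP[j1 j1S aj1] : has (fun j => a j != 0) S.
  apply: contraNT a0 => /hasPn a_0; rewrite /comb big_seq big1 // => l lS.
  by move/negPn/eqP: (a_0 l lS) => ->; rewrite scale0r.
have ex : exists j, (j \in S) && (a j != 0) by exists j1; rewrite j1S.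
case: (ex_minnP ex) => j /andP[jS aj] jmin; exists j => //; split => //.
rewrite /tailcomb -combZ; apply: eq_comb => l lS; rewrite /tailcoef eq_sym.
case: ltngtP => [jl|lj|<-]; last by rewrite addr0 mulr1.
- by rewrite add0r mulrC divfK.
- rewrite addr0 mulr0; apply/eqP; apply: contraTT lj => al0.
  by rewrite -leqNgt jmin // lS.
Qed.

End Combinations.

Section NonvanishingTails.
Variables (K : fieldType) (p : nat) (al be : nat -> nat) (S : seq nat).
Hypothesis hp : p \in [pchar K].
Hypothesis admS : admissible p al be S.
Hypothesis tails_neq0 : {in S, forall j (c : nat -> K), tailcomb al be S j c != 0}.

Local Notation tail := (tailcomb al be S).

(* For each j, a choice of coefficients maximizing the valuation of the tail
   at j; the maximum exists since all these valuations are < p. *)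
Definition best_tail (j : nat) : nat -> K :=
  epsilon (inhabits (fun=> 0 : K))
    (fun c => forall c' : nat -> K, (pval (tail j c') <= pval (tail j c))%N).

Definition topval (j : nat) : nat := pval (tail j (best_tail j)).

Lemma best_tailP j : j \in S -> forall c : nat -> K, (pval (tail j c) <= topval j)%N.
Proof.
move=> jS; apply: (epsilon_spec (inhabits (fun=> 0 : K))
  (fun c => forall c' : nat -> K, (pval (tail j c') <= pval (tail j c))%N)).
apply: (exists_argmax (fun=> 0) (b := p)) => c.
by apply/ltnW/pval_comb_lt => //; apply: tails_neq0.
Qed.

Lemma topval_ge j : j \in S -> (al j <= topval j)%N.
Proof. by move=> jS; apply: (pval_tailcomb_ge admS jS); apply: tails_neq0. Qed.

Lemma topval_lt j : j \in S -> (topval j < p)%N.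
Proof. by move=> jS; apply: pval_comb_lt => //; apply: tails_neq0. Qed.

(* Maximal valuations at distinct indices differ: otherwise the lowest terms
   could be cancelled, raising the valuation of the earlier tail. *)
Lemma topval_lt_neq j l : j \in S -> l \in S -> (j < l)%N -> topval j != topval l.
Proof.
move=> jS lS jl; apply/eqP => eq_top.
set hj := tail j (best_tail j); set hl := tail l (best_tail l).
set lam := (punit hj).[0] / (punit hl).[0].
pose c i := best_tail j i - lam * tailcoef l (best_tail l) i.
have tail_c : tail j c = hj - lam *: hl.
  by rewrite /tailcomb -combZ -combB; apply: eq_comb => i _; apply: tailcoefB.
have : 'X^((pval hj).+1) %| tail j c.
  by rewrite tail_c dvdp_cancel_lowest //; apply: tails_neq0.
by rewrite -pval_geq ?tails_neq0 // ltnNge best_tailP.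
Qed.

Lemma topval_inj : {in S &, injective topval}.
Proof.
move=> j l jS lS eq_top; case: (ltngtP j l) => [jl|lj|//].
  by have := topval_lt_neq jS lS jl; rewrite eq_top eqxx.
by have := topval_lt_neq lS jS lj; rewrite eq_top eqxx.
Qed.

(* The Wronskian estimate applied to the tails at the indices >= j0 shows
   that the maximal valuation at j0 exceeds al j0 by at most C(m,2), where m
   is the number of these indices. *)
Lemma topval_bound j0 : j0 \in S ->
  (topval j0 <= al j0 + 'C(count (fun i => j0 <= i)%N S, 2))%N.
Proof.
move=> j0S; set T := [seq i <- S | (j0 <= i)%N].
have [uT _ _] := admissible_filter (fun i => j0 <= i)%N admS.
pose nt (t : 'I_(size T)) := nth 0%N T t.
have ntT t : nt t \in T by apply: mem_nth.
have ntS t : nt t \in S by have := ntT t; rewrite mem_filter => /andP[].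
have ntge t : (j0 <= nt t)%N by have := ntT t; rewrite mem_filter => /andP[].
pose M : 'M[K]_(size T) := \matrix_(t', t) tailcoef (nt t) (best_tail (nt t)) (nt t').
have sum_bound :
    (\sum_t topval (nt t) <= \sum_t al (nt t) + 'C(size T, 2))%N.
  apply: (@wronskian_pval_bound K p hp (size T) (fun t => al (nt t)) (fun t => be (nt t))
           M (fun t => tail (nt t) (best_tail (nt t)))).
  - move=> t; rewrite /tailcomb (@comb_filter K al be S (fun i => j0 <= i)%N); last first.
      by move=> l _; rewrite -ltnNge => lj0; apply: tailcoef_lt (leq_trans lj0 (ntge t)).
    by rewrite comb_nth; apply: eq_bigr => t' _; rewrite mxE.
  - by move=> t; apply: tails_neq0.
  - move=> t t' /topval_inj eq_nt; apply/val_inj/eqP.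
    by rewrite -(nth_uniq 0%N _ _ uT) ?ltn_ord //; apply/eqP; exact: eq_nt (ntS t) (ntS t').
  - by move=> t; apply: topval_lt.
have t0 : (index j0 T < size T)%N by rewrite index_mem mem_filter leqnn.
have := sum_excess_term (Ordinal t0) (fun t => topval_ge (ntS t)) sum_bound.
by rewrite /nt nth_index ?size_filter // -index_mem.
Qed.

(* When no tail vanishes, the theorem's bound holds for every nonzero
   combination: it is a multiple of a tail at some j0. *)
Lemma pval_comb_le_nonvanishing (a : nat -> K) : comb al be S a != 0 ->
  exists2 j, j \in S & (pval (comb al be S a) <= al j + 'C(count (fun i => j <= i)%N S, 2))%N.
Proof.
move=> a0; have [j jS [aj ->]] := comb_as_tail a0.
by exists j => //; rewrite pvalZ //; apply: leq_trans (best_tailP jS _) (topval_bound jS).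
Qed.

End NonvanishingTails.

(* The main bound for admissible index sequences, by induction on their
   length: if some tail vanishes, its index can be eliminated from the
   combination; otherwise the bound for nonvanishing tails applies. *)
Lemma pval_comb_le (K : fieldType) p (hp : p \in [pchar K]) (al be : nat -> nat)
    (S : seq nat) (a : nat -> K) :
  admissible p al be S -> comb al be S a != 0 -> exists2 j, j \in S &
    (pval (comb al be S a) <= al j + 'C(count (fun i => j <= i)%N S, 2))%N.
Proof.
have [n] := ubnP (size S); elim: n => // n IH in S a *; move=> sizeS admS a0.
have [[j [jS [c tail0]]] | nonvan] :=
  classic (exists j, j \in S /\ exists c : nat -> K, tailcomb al be S j c = 0); last first.
  apply: (pval_comb_le_nonvanishing hp admS) => // j jS c; apply/eqP => tail0.
  by apply: nonvan; exists j; split => //; exists c.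
set S' := [seq l <- S | l != j].
pose a' l := a l - a j * tailcoef j c l.
have comb_a' : comb al be S a = comb al be S' a'.
  rewrite -comb_filter; last by move=> l _ /negPn/eqP ->; rewrite /a' tailcoef_id mulr1 subrr.
  by rewrite combB combZ -/(tailcomb al be S j c) tail0 scaler0 subr0.
have sizeS' : (size S' < n)%N.
  have j_counted : (0 < count_mem j S)%N by rewrite -has_count has_pred1.
  rewrite size_filter (eq_count (a2 := predC (pred1 j))) //.
  move: (count_predC (pred1 j) S) sizeS j_counted.
  by move: (count_mem j S) (count (predC (pred1 j)) S) (size S) => c1 c2 s; lia.
have a'0 : comb al be S' a' != 0 by rewrite -comb_a'.
have [l lS' bound] := IH S' a' sizeS' (admissible_filter _ admS) a'0.
exists l; first by move: lS'; rewrite mem_filter => /andP[].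
rewrite comb_a'; apply: leq_trans bound _; rewrite leq_add2l leq_bin2l //.
by rewrite count_filter; apply: sub_count => i /andP[].
Qed.

Lemma count_iota_geq a n j : count (fun i => j <= i)%N (iota a n) = (n - (j - a))%N.
Proof.
elim: n a => [|n IH] a /=; first by rewrite sub0n.
by rewrite IH; case: (leqP j a) => h /=; lia.
Qed.

Theorem theorem5p2 (K : fieldType) (p : nat) (hp : p \in [pchar K])
  (k : nat) (a : nat -> K) (alpha beta : nat -> nat)
  (halpha : forall i j : nat, (1 <= i)%N -> (i <= j)%N -> (j <= k)%N ->
     (alpha i <= alpha j)%N)
  (hpbig : forall j : nat, (1 <= j)%N -> (j <= k)%N -> (alpha j + beta j < p)%N) :
  let P : {poly K} :=
    \sum_(1 <= j < k.+1) a j *: ('X^(alpha j) * (1 + 'X) ^+ (beta j)) in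
  P != 0 ->
  (pval P <= \max_(1 <= j < k.+1) (alpha j + 'C(k.+1 - j, 2))%N)%N.
Proof.
move=> P P0; have P_comb : P = comb alpha beta (iota 1 k) a.
  by rewrite /P /comb /index_iota subn1.
have adm : admissible p alpha beta (iota 1 k).
  split; first exact: iota_uniq.
    move=> i j; rewrite !mem_iota add1n !ltnS => /andP[i1 _] /andP[_ jk] ij.
    exact: halpha.
  by move=> j; rewrite mem_iota add1n ltnS => /andP[j1 jk]; exact: hpbig.
rewrite P_comb in P0 *; have [j jS bound] := pval_comb_le hp adm P0.
have j1 : (1 <= j)%N by move: jS; rewrite mem_iota => /andP[].
apply: leq_trans bound _.
have -> : count (fun i => j <= i)%N (iota 1 k) = (k.+1 - j)%N.
  by rewrite count_iota_geq; lia.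
have jI : j \in index_iota 1 k.+1 by rewrite /index_iota subn1.
exact: (@leq_bigmax_seq _ _ xpredT (fun j => alpha j + 'C(k.+1 - j, 2))%N j jI).
Qed.
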